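(* Consider the stationary mean field model with scalar interaction described in the context, with finite state space $X$. Suppose that (a) for every $m\in[a,b]$ the optimal policy correspondence $G(\cdot,m)$ is single-valued, with unique selection $g(\cdot,m)$; and (b) for every $m\in[a,b]$ the Markov chain $L_{m,g}$ on $X$ is irreducible and aperiodic, so that it has a unique invariant distribution $s^{m,g}$. Define $f:[a,b]\to\mathbb{R}$ by $f(m)=m-M(s^{m,g})$. Run the following bisection procedure (Adaptive Value Function Iteration): set $a_1=a$, $b_1=b$; at iteration $t$, set $m_t=(a_t+b_t)/2$, compute the value function $V(\cdot,m_t)$ (e.g. by value iteration), the optimal policy $g_t=g(\cdot,m_t)$, and the unique invariant distribution $s^{m_t,g_t}$ of $L_{m_t,g_t}$; evaluate $f(m_t)=m_t-M(s^{m_t,g_t})$; if $f(m_t)=0$ stop; if $f(m_t)>0$ set $b_{t+1}=m_t,\ a_{t+1}=a_t$; if $f(m_t)<0$ set $a_{t+1}=m_t,\ b_{t+1}=b_t$. Then the sequence $\{m_t\}$ converges to some $m^*\in[a,b]$ with $f(m^* )=0$ (if the procedure stops at a finite $t$, take $m^*=m_t$), and the pair consisting of the policy $g^*=g(\cdot,m^* )$ and the population state $s^{m^*,g^*}$ constitutes a mean field equilibrium.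
   Context: Model. $X$ is a finite set of individual states; $\mathcal{P}(X)$ is the set of probability measures on $X$ (population states). $A\subseteq\mathbb{R}^q$ is the action set and $\Gamma:X\to 2^A$ is a nonempty compact-valued continuous (upper and lower hemicontinuous) feasibility correspondence. The scalar interaction function $M:\mathcal{P}(X)\to[a,b]$ is continuous, with known bounds $a<b$. Idiosyncratic shocks $\zeta$ are i.i.d. with law $q$ on a compact separable metric space $E$. The transition function $w:X\times A\times[a,b]\times E\to X$ is continuous: an agent in state $x$ taking action $a'$ when the scalar interaction is $m$ moves to $w(x,a',m,\zeta)$. The one-period payoff $\pi:X\times A\times[a,b]\to\mathbb{R}$ is bounded and continuous, and $\beta\in(0,1)$ is the discount factor. For fixed $m\in[a,b]$, $V(x,m)$ is the supremum over (history-dependent, feasible) policies of the expected discounted payoff $\mathbb{E}\sum_{t\ge1}\beta^{t-1}\pi(x(t),a(t),m)$ from initial state $x$; it satisfies the Bellman equation $V(x,m)=\max_{a'\in\Gamma(x)}\{\pi(x,a',m)+\beta\int_E V(w(x,a',m,\zeta),m)\,q(d\zeta)\}$. The optimal policy correspondence is $G(x,m)=\arg\max_{a'\in\Gamma(x)}\{\pi(x,a',m)+\beta\int_E V(w(x,a',m,\zeta),m)\,q(d\zeta)\}$. For a stationary policy $g(x,m)$ and $m\in[a,b]$, $L_{m,g}(x,y)=q(\{\zeta: w(x,g(x,m),m,\zeta)=y\})$. Mean field equilibrium (MFE): a stationary policy $g$ and $s\in\mathcal{P}(X)$ such that (1) $g(x,M(s))\in G(x,M(s))$ for all $x$, and (2)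 $s(y)=\sum_{x\in X}L_{M(s),g}(x,y)s(x)$ for all $y\in X$. *)

From HB Require Import structures.
From mathcomp Require Import all_boot all_order all_algebra.
From mathcomp Require Import all_classical all_reals all_analysis.
Set Implicit Arguments. Unset Strict Implicit. Unset Printing Implicit Defensive.
Import Order.TTheory GRing.Theory Num.Theory.
Import numFieldNormedType.Exports.
Local Open Scope classical_set_scope.
Local Open Scope ring_scope.

Notation borel_type E := (g_sigma_algebraType (@open E)).

Definition simplex (R : realType) (X : finType) (s : X -> R) : Prop :=
  (forall x, 0 <= s x) /\ \sum_(x : X) s x = 1.

Fixpoint npow (R : realType) (X : finType) (P : X -> X -> R) (n : nat)
  (x y : X) : R :=
  match n with
  | 0 => (x == y)%:R
  | n'.+1 => \sum_(z : X) npow P n' x z * P z y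
  end.

Definition irreducible (R : realType) (X : finType) (P : X -> X -> R) : Prop :=
  forall x y : X, exists n : nat, (0 < n)%N /\ 0 < npow P n x y.

Definition aperiodic (R : realType) (X : finType) (P : X -> X -> R) : Prop :=
  forall (x : X) (d : nat),
    (forall n : nat, (0 < n)%N -> 0 < npow P n x x -> (d %| n)%N) -> d = 1%N.

Definition invariant_dist (R : realType) (X : finType) (P : X -> X -> R)
  (s : X -> R) : Prop :=
  simplex s /\ forall y : X, s y = \sum_(x : X) P x y * s x.

Definition transL (R : realType) (X : finType) (q : nat)
  (E : ptopologicalType) (qE : probability (borel_type E) R)
  (w : X -> 'rV[R]_q -> R -> E -> X) (g : X -> R -> 'rV[R]_q)
  (m : R) (x y : X) : R :=
  fine (qE [set z : borel_type E | w x (g x m) m z = y]).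

Definition bellman_obj (R : realType) (X : finType) (q : nat)
  (E : ptopologicalType) (qE : probability (borel_type E) R)
  (w : X -> 'rV[R]_q -> R -> E -> X) (pi : X -> 'rV[R]_q -> R -> R)
  (beta : R) (V : X -> R -> R) (x : X) (a' : 'rV[R]_q) (m : R) : R :=
  pi x a' m + beta * (\int[qE]_z V (w x a' m z) m).

Definition optG (R : realType) (X : finType) (q : nat)
  (E : ptopologicalType) (qE : probability (borel_type E) R)
  (Gam : X -> set 'rV[R]_q)
  (w : X -> 'rV[R]_q -> R -> E -> X) (pi : X -> 'rV[R]_q -> R -> R)
  (beta : R) (V : X -> R -> R) (x : X) (m : R) : set 'rV[R]_q :=
  [set a' | Gam x a' /\ forall b', Gam x b' ->
       bellman_obj qE w pi beta V x b' m <= bellman_obj qE w pi beta V x a' m].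

Definition bellman_eq (R : realType) (X : finType) (q : nat)
  (E : ptopologicalType) (qE : probability (borel_type E) R)
  (Gam : X -> set 'rV[R]_q)
  (w : X -> 'rV[R]_q -> R -> E -> X) (pi : X -> 'rV[R]_q -> R -> R)
  (beta : R) (V : X -> R -> R) (m : R) : Prop :=
  forall x : X,
    (exists2 a', Gam x a' & V x m = bellman_obj qE w pi beta V x a' m) /\
    (forall a', Gam x a' -> bellman_obj qE w pi beta V x a' m <= V x m).

Definition is_MFE (R : realType) (X : finType) (q : nat)
  (E : ptopologicalType) (qE : probability (borel_type E) R)
  (Gam : X -> set 'rV[R]_q)
  (w : X -> 'rV[R]_q -> R -> E -> X) (pi : X -> 'rV[R]_q -> R -> R)
  (beta : R) (V : X -> R -> R) (M : (X -> R) -> R)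
  (g : X -> R -> 'rV[R]_q) (s : X -> R) : Prop :=
  simplex s /\
  (forall x : X, optG qE Gam w pi beta V x (M s) (g x (M s))) /\
  (forall y : X, s y = \sum_(x : X) transL qE w g (M s) x y * s x).

(* Bisection (Adaptive Value Function Iteration): the t-th interval
   (a_{t+1}, b_{t+1}), t = 0,1,...  Once f(m_t) = 0 the procedure stops,
   which is encoded by keeping the interval (hence m_t) constant. *)
Fixpoint bisect (R : realType) (f : R -> R) (a b : R) (t : nat) : R * R :=
  match t with
  | 0 => (a, b)
  | t'.+1 =>
      let p := bisect f a b t' in
      let m := (p.1 + p.2) / 2 in
      if f m == 0 then p
      else if 0 < f m then (p.1, m) else (m, p.2)
  end.

(* m_{t+1} = (a_{t+1} + b_{t+1}) / 2 *)
Definition bisect_mid (R : realType) (f : R -> R) (a b : R) (t : nat) : R :=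
  ((bisect f a b t).1 + (bisect f a b t).2) / 2.

From HB Require Import structures.
From mathcomp Require Import all_boot all_order all_algebra.
From mathcomp Require Import all_classical all_reals all_analysis.
From mathcomp Require Import ring lra.
Import Order.TTheory GRing.Theory Num.Theory.
Import numFieldNormedType.Exports.
Local Open Scope classical_set_scope.
Local Open Scope ring_scope.

Set Implicit Arguments.
Unset Strict Implicit.
Unset Printing Implicit Defensive.

(* Since X is finite, continuity of w means that w is locally constant, and by
   compactness of E and of the action sets it is constant near (a', m)
   uniformly in the shock.  The Bellman equation is a beta-contraction whose
   data vary continuously with m, so V(., m) is continuous in m; by Berge's
   argument the unique maximiser g(x, .) is continuous, hence the kernel
   L_{m,g} is locally constant in m.  An irreducible chain has at most one
   invariant distribution, so m |-> s^{m,g} is locally constant as well and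
   f(m) = m - M(s^{m,g}) is continuous.  As f(a) <= 0 <= f(b), bisection
   converges to a root m*, and M(s^{m*,g}) = m* is exactly the consistency
   condition of a mean field equilibrium.  Since the value function is given
   through the Bellman equation, boundedness of pi and nonemptiness of Gam are
   not used; neither are aperiodicity, the continuity of M, or the Hausdorff
   and separability assumptions on E. *)

Definition locally_constant {T : topologicalType} {U : Type} (h : T -> U) :=
  forall t0, \forall t \near t0, h t = h t0.

Lemma near_compact_forall (T U : topologicalType) (K : set U)
    (P : T -> U -> Prop) (t0 : T) :
  compact K ->
  (forall u0, K u0 -> \forall u \near u0 & t \near t0, K u -> P t u) ->
  \forall t \near t0, forall u, K u -> P t u.
Proof.
move=> cK hP.
have cov := (near_covering_withinP K).2 ((compact_near_coveringP K).1 cK).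
by apply: filterS (cov T (nbhs t0) P _ hP) => t KP u /KP.
Qed.

Lemma cvg_within_seq (T : topologicalType) (A : set T) (u : nat -> T) (l : T) :
  (forall n, A (u n)) -> u @ \oo --> l -> u @ \oo --> within A (nbhs l).
Proof.
by move=> uA ul P /ul; apply: (filterS (F := \oo)) => n /=; apply; exact: uA.
Qed.

Section transition_map.
Context (R : realType) (X : finType) (q : nat) (A : set 'rV[R]_q) (a b : R)
  (E : topologicalType) (w : X -> 'rV[R]_q -> R -> E -> X).
Hypothesis w_near : forall x a0 m0 z0, A a0 -> a <= m0 <= b ->
  \forall p \near (a0, m0, z0),
    A p.1.1 -> a <= p.1.2 <= b -> w x p.1.1 p.1.2 p.2 = w x a0 m0 z0.
Hypothesis compactE : compact [set: E].

Lemma w_locally_constant x a0 m0 :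
  A a0 -> a <= m0 <= b -> locally_constant (w x a0 m0).
Proof.
move=> Aa0 Im0 z0; case: (w_near x z0 Aa0 Im0) => -[U V] [/= NU NV] UV.
apply: filterS NV => z Vz.
exact: (UV ((a0, m0), z) (conj (nbhs_singleton NU) Vz) Aa0 Im0).
Qed.

Lemma w_near_uniform x a0 m0 : A a0 -> a <= m0 <= b ->
  \forall p \near (a0, m0), A p.1 -> a <= p.2 <= b ->
    forall z, w x p.1 p.2 z = w x a0 m0 z.
Proof.
move=> Aa0 Im0.
pose P p z := A p.1 -> a <= p.2 <= b -> w x p.1 p.2 z = w x a0 m0 z.
suff : \forall p \near (a0, m0), forall z, [set: E] z -> P p z.
  by apply: filterS => p H Ap Ip z; exact: H.
apply: near_compact_forall compactE _ => z0 _.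
case: (w_near x z0 Aa0 Im0) => -[U V] [/= NU NV] UV.
exists (V, U) => //= -[z p] /= [Vz Up] _ Ap Ip.
have e1 := UV (p, z) (conj Up Vz) Ap Ip.
have e2 := UV ((a0, m0), z) (conj (nbhs_singleton NU) Vz) Aa0 Im0.
by rewrite /= in e1 e2; rewrite e1 e2.
Qed.

Lemma w_near_uniform_compact x (K : set 'rV[R]_q) m0 :
  compact K -> K `<=` A -> a <= m0 <= b ->
  \forall m \near m0, a <= m <= b ->
    forall a', K a' -> forall z, w x a' m z = w x a' m0 z.
Proof.
move=> cK KA Im0.
pose P m a' := a <= m <= b -> forall z, w x a' m z = w x a' m0 z.
suff : \forall m \near m0, forall a', K a' -> P m a'.
  by apply: filterS => m H Im a' Ka' z; exact: H.
apply: near_compact_forall cK _ => a0 Ka0.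
case: (w_near_uniform x (KA a0 Ka0) Im0) => -[U V] [/= NU NV] UV.
exists (U, V) => //= -[a' m] /= [Ua Vm] Ka Im z.
have e1 := UV (a', m) (conj Ua Vm) (KA _ Ka) Im.
have e2 := UV (a', m0) (conj Ua (nbhs_singleton NV)) (KA _ Ka) Im0.
by rewrite /= in e1 e2; rewrite e1 e2.
Qed.

End transition_map.

Section locally_constant_integral.
Context (R : realType) (X : finType) (E : ptopologicalType)
  (qE : probability (borel_type E) R) (wf : E -> X).
Hypothesis wf_lc : locally_constant wf.

Lemma locally_constant_measurable (h : X -> R) :
  measurable_fun [set: borel_type E] (fun z => h (wf z)).
Proof.
move=> _ B _; rewrite setTI; apply: sub_gen_smallest.
rewrite openE => z0 Bz0; rewrite /interior.
by apply: filterS (wf_lc z0) => z /= ->.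
Qed.

Lemma locally_constant_integrable (h : X -> R) :
  qE.-integrable setT (EFin \o (fun z => h (wf z))).
Proof.
apply: measurable_bounded_integrable => //.
- by have := probability_setT qE; rewrite /= => ->; rewrite ltry.
- exact: locally_constant_measurable.
exists (\big[Num.max/0]_(y : X) `|h y|); split; first exact: num_real.
by move=> r hr z _; apply: le_trans (ltW hr); exact: le_bigmax.
Qed.

Lemma Rintegral_locally_constant_le (h : X -> R) (D : R) :
  (forall y, `|h y| <= D) -> `|\int[qE]_z h (wf z)| <= D.
Proof.
move=> hD.
apply: le_trans (le_normr_Rintegral _ (locally_constant_integrable h)) _ => //.
apply: le_trans (@le_Rintegral _ _ _ qE setT _ (fun _ => D) measurableT
  (locally_constant_integrable (fun y => `|h y|))
  (locally_constant_integrable (fun _ => D)) (fun z _ => hD (wf z))) _.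
rewrite Rintegral_cst //; have := probability_setT qE; rewrite /= => ->.
by rewrite mulr1.
Qed.

End locally_constant_integral.

Section value_and_policy.
Context (R : realType) (X : finType) (q : nat) (A : set 'rV[R]_q) (a b : R)
  (Gam : X -> set 'rV[R]_q)
  (E : ptopologicalType) (qE : probability (borel_type E) R)
  (w : X -> 'rV[R]_q -> R -> E -> X) (pi : X -> 'rV[R]_q -> R -> R)
  (beta : R) (V : X -> R -> R).
Hypothesis w_near : forall x a0 m0 z0, A a0 -> a <= m0 <= b ->
  \forall p \near (a0, m0, z0),
    A p.1.1 -> a <= p.1.2 <= b -> w x p.1.1 p.1.2 p.2 = w x a0 m0 z0.
Hypothesis compactE : compact [set: E].
Hypothesis GamA : forall x, Gam x `<=` A.
Hypothesis compact_Gam : forall x, compact (Gam x).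
Hypothesis pi_cont : forall x,
  {within [set p : 'rV[R]_q * R | A p.1 /\ a <= p.2 <= b],
    continuous (fun p => pi x p.1 p.2)}.
Hypothesis beta01 : 0 < beta < 1.
Hypothesis bellman : forall m, a <= m <= b -> bellman_eq qE Gam w pi beta V m.

Local Notation obj := (bellman_obj qE w pi beta V).

Lemma pi_near x a0 m0 (e : R) : A a0 -> a <= m0 <= b -> 0 < e ->
  \forall p \near (a0, m0), A p.1 -> a <= p.2 <= b ->
    `|pi x a0 m0 - pi x p.1 p.2| < e.
Proof.
move=> Aa0 Im0 e0.
have := (subspace_continuousP _ _).1 (@pi_cont x) (a0, m0) (conj Aa0 Im0).
move/cvgr_dist_lt => /(_ e e0) near_within.
have : \forall p \near (a0, m0), [set p | A p.1 /\ a <= p.2 <= b] p ->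
  `|pi x a0 m0 - pi x p.1 p.2| < e := near_within.
by apply: filterS => p H Ap Ip; exact: H.
Qed.

Lemma pi_near_uniform x m0 (e : R) : a <= m0 <= b -> 0 < e ->
  \forall m \near m0, a <= m <= b ->
    forall a', Gam x a' -> `|pi x a' m - pi x a' m0| < e.
Proof.
move=> Im0 e0.
pose P m a' := a <= m <= b -> `|pi x a' m - pi x a' m0| < e.
suff : \forall m \near m0, forall a', Gam x a' -> P m a'.
  by apply: filterS => m H Im a' Ga'; exact: H.
apply: near_compact_forall (@compact_Gam x) _ => a0 Ga0.
have e20 : 0 < e / 2 by rewrite divr_gt0.
case: (pi_near x (GamA Ga0) Im0 e20) => -[U W] [/= NU NW] UW.
exists (U, W) => //= -[a' m] /= [Ua Wm] Ga Im.
have h1 := UW (a', m) (conj Ua Wm) (GamA Ga) Im.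
have h2 := UW (a', m0) (conj Ua (nbhs_singleton NW)) (GamA Ga) Im0.
rewrite /= in h1 h2.
apply: le_lt_trans (ler_distD (pi x a0 m0) _ _) _.
by rewrite (distrC (pi x a' m)) (splitr e) ltrD.
Qed.

Lemma bellman_obj_dist x a' m a0 m0 (D e : R) : A a0 -> a <= m0 <= b ->
  `|pi x a' m - pi x a0 m0| < e -> (forall z, w x a' m z = w x a0 m0 z) ->
  (forall y, `|V y m - V y m0| <= D) ->
  `|obj x a' m - obj x a0 m0| <= e + beta * D.
Proof.
move=> Aa0 Im0 hpi hw hV; rewrite /bellman_obj.
have -> : \int[qE]_z V (w x a' m z) m = \int[qE]_z V (w x a0 m0 z) m.
  by congr (Rintegral _ _ _); apply: funext => z; rewrite hw.
have lc := w_locally_constant w_near x Aa0 Im0.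
have intm := locally_constant_integrable qE lc (fun y => V y m).
have intm0 := locally_constant_integrable qE lc (fun y => V y m0).
rewrite opprD addrACA -mulrBr -RintegralB //.
apply: le_trans (ler_normD _ _) _; apply: lerD; first exact: ltW.
have /andP[b0 _] := beta01.
rewrite normrM (gtr0_norm b0); apply: ler_wpM2l; first exact: ltW.
exact: (Rintegral_locally_constant_le qE lc (h := fun y => V y m - V y m0)).
Qed.

Lemma value_dist_le m m0 (e : R) : a <= m <= b -> a <= m0 <= b ->
  (forall x a', Gam x a' -> `|pi x a' m - pi x a' m0| < e) ->
  (forall x a', Gam x a' -> forall z, w x a' m z = w x a' m0 z) ->
  forall x, `|V x m - V x m0| <=
    e + beta * \big[Num.max/0]_(y : X) `|V y m - V y m0|.
Proof.
move=> Im Im0 hpi hw x.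
have hD y : `|V y m - V y m0| <= \big[Num.max/0]_(y : X) `|V y m - V y m0|.
  exact: le_bigmax.
have [[a1 Ga1 V1] le1] := bellman Im x.
have [[a2 Ga2 V2] le2] := bellman Im0 x.
have := bellman_obj_dist (GamA Ga1) Im0 (hpi _ _ Ga1) (hw _ _ Ga1) hD.
rewrite ler_norml => /andP[_ d1].
have := bellman_obj_dist (GamA Ga2) Im0 (hpi _ _ Ga2) (hw _ _ Ga2) hD.
rewrite ler_norml => /andP[d2 _].
rewrite ler_norml; apply/andP; split.
  apply: le_trans d2 _; rewrite V2; apply: lerD => //; exact: le1.
apply: le_trans d1; rewrite V1; apply: lerD => //; rewrite lerN2; exact: le2.
Qed.

Lemma value_near m0 (e : R) : a <= m0 <= b -> 0 < e ->
  \forall m \near m0, a <= m <= b -> forall y, `|V y m - V y m0| <= e.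
Proof.
move=> Im0 e0; have /andP[b0 b1] := beta01.
(* D <= e' + beta D forces D <= e' / (1 - beta) = e *)
set e' := e * (1 - beta).
have e'0 : 0 < e' by rewrite mulr_gt0 // subr_gt0.
have near_x x : \forall m \near m0, a <= m <= b ->
    (forall a', Gam x a' -> `|pi x a' m - pi x a' m0| < e') /\
    (forall a', Gam x a' -> forall z, w x a' m z = w x a' m0 z).
  apply: filterS2 (pi_near_uniform x Im0 e'0)
    (w_near_uniform_compact w_near compactE x (@compact_Gam x) (@GamA x) Im0).
  by move=> m h1 h2 Im; split; [exact: h1 | exact: h2].
apply: filterS (filter_forall _ near_x) => m H Im.
set D := \big[Num.max/0]_(y : X) `|V y m - V y m0|.
have key := value_dist_le Im Im0 (fun x => (H x Im).1) (fun x => (H x Im).2).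
have DD : D <= e' + beta * D.
  apply: bigmax_le => [|y _]; last exact: key.
  have D0 : 0 <= D by exact: bigmax_ge_id.
  by apply: addr_ge0; [exact: ltW | apply: mulr_ge0 => //; exact: ltW].
have De : D <= e.
  have : D * (1 - beta) <= e' by rewrite mulrBr mulr1 lerBlDr (mulrC D beta).
  by rewrite /e' ler_pM2r // subr_gt0.
by move=> y; apply: le_trans De; exact: le_bigmax.
Qed.

Lemma bellman_obj_near x a0 m0 (e : R) : A a0 -> a <= m0 <= b -> 0 < e ->
  \forall p \near (a0, m0), A p.1 -> a <= p.2 <= b ->
    `|obj x p.1 p.2 - obj x a0 m0| < e.
Proof.
move=> Aa0 Im0 e0; have /andP[_ b1] := beta01.
have e20 : 0 < e / 2 by rewrite divr_gt0.
have Hpi := pi_near x Aa0 Im0 e20.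
have Hw := w_near_uniform w_near compactE x Aa0 Im0.
have HV : \forall p \near (a0, m0), a <= p.2 <= b ->
    forall y, `|V y p.2 - V y m0| <= e / 2.
  exact: (cvg_snd (F := nbhs a0)) (value_near Im0 e20).
apply: filterS2 (filterS2 _ (fun _ h1 h2 => conj h1 h2) Hpi Hw) HV.
move=> p [h1 h2] h3 Ap Ip.
have := bellman_obj_dist Aa0 Im0 _ (h2 Ap Ip) (h3 Ip).
rewrite distrC in h1; move=> /(_ _ (h1 Ap Ip)) h.
apply: le_lt_trans h _.
by rewrite [X in _ < X](splitr e) ltrD2l gtr_pMl.
Qed.

Variable g : X -> R -> 'rV[R]_q.
Hypothesis g_opt : forall m, a <= m <= b -> forall x,
  optG qE Gam w pi beta V x m = [set g x m].

Lemma policy_opt x m : a <= m <= b ->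
  Gam x (g x m) /\ forall a', Gam x a' -> obj x a' m <= obj x (g x m) m.
Proof.
by move=> Im; have : optG qE Gam w pi beta V x m (g x m) by rewrite g_opt.
Qed.

Lemma policy_near x m0 (U : set 'rV[R]_q) : a <= m0 <= b -> nbhs (g x m0) U ->
  \forall m \near m0, a <= m <= b -> U (g x m).
Proof.
move=> Im0; rewrite nbhsE => -[U' [oU' U'g] U'U].
have [Gg0 opt0] := policy_opt x Im0.
pose K := Gam x `&` ~` U'.
have cK : compact K.
  apply: (subclosed_compact _ (@compact_Gam x)); last exact: subIsetl.
  apply: closedI; last exact: open_closedC.
  exact: compact_closed (@norm_hausdorff _ 'rV[R]_q) (@compact_Gam x).
pose P m a' := a <= m <= b -> obj x a' m < obj x (g x m0) m.
suff : \forall m \near m0, forall a', K a' -> P m a'.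
  apply: filterS => m H Im; apply: U'U.
  have [//|nU'] := pselect (U' (g x m)).
  have [Gg opt] := policy_opt x Im.
  by have := H _ (conj Gg nU') Im; rewrite ltNge opt.
apply: near_compact_forall cK _ => a0 [Ga0 nU'a0].
(* strict, because the maximiser at m0 is unique and lies in U' *)
have lt0 : obj x a0 m0 < obj x (g x m0) m0.
  rewrite lt_neqAle opt0 // andbT; apply/eqP => eq0; apply: nU'a0.
  have : optG qE Gam w pi beta V x m0 a0.
    by split => // b' Gb'; rewrite eq0; exact: opt0.
  by rewrite g_opt // => ->.
set d := obj x (g x m0) m0 - obj x a0 m0.
have d2 : 0 < d / 2 by rewrite divr_gt0 // subr_gt0.
case: (bellman_obj_near x (GamA Ga0) Im0 d2) => -[U1 V1] [/= NU1 NV1] S1.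
case: (bellman_obj_near x (GamA Gg0) Im0 d2) => -[U2 V2] [/= NU2 NV2] S2.
exists (U1, V1 `&` V2) => /=; first by split => //; exact: filterI.
move=> [a' m] /= [Ua [Vm1 Vm2]] Ka Im.
have h1 := S1 (a', m) (conj Ua Vm1) (GamA Ka.1) Im.
have h2 := S2 (g x m0, m) (conj (nbhs_singleton NU2) Vm2) (GamA Gg0) Im.
move: h1 h2; rewrite /= !ltr_norml => /andP[_ h1] /andP[h2 _].
rewrite /d in h1 h2; lra.
Qed.

Lemma transL_near m0 : a <= m0 <= b ->
  \forall m \near m0, a <= m <= b -> transL qE w g m = transL qE w g m0.
Proof.
move=> Im0.
have w_g_near x : \forall m \near m0, a <= m <= b ->
    forall z, w x (g x m) m z = w x (g x m0) m0 z.
  have Gg0 := GamA (policy_opt x Im0).1.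
  case: (w_near_uniform w_near compactE x Gg0 Im0) => -[U1 V1] [/= NU1 NV1] S1.
  apply: filterS2 (policy_near Im0 NU1) NV1 => m gU Vm Im z.
  exact: (S1 (g x m, m) (conj (gU Im) Vm) (GamA (policy_opt x Im).1) Im z).
apply: filterS (filter_forall _ w_g_near) => m H Im.
apply: funext => x; apply: funext => y; rewrite /transL.
by congr (fine (qE _)); apply: eq_set => z; rewrite (H x Im z).
Qed.

End value_and_policy.

Lemma transL_ge0 (R : realType) (X : finType) (q : nat) (E : ptopologicalType)
    (qE : probability (borel_type E) R) (w : X -> 'rV[R]_q -> R -> E -> X)
    (g : X -> R -> 'rV[R]_q) (m : R) (x y : X) :
  0 <= transL qE w g m x y.
Proof. by rewrite /transL fine_ge0 // measure_ge0. Qed.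

Section invariant_distribution.
Context (R : realType) (X : finType) (P : X -> X -> R).
Hypothesis P_ge0 : forall x y, 0 <= P x y.

Lemma npow_ge0 n x y : 0 <= npow P n x y.
Proof.
elim: n x y => [|n IH] x y /=; first exact: ler0n.
by apply: sumr_ge0 => z _; apply: mulr_ge0.
Qed.

Lemma npow_invariant (u : X -> R) :
  (forall y, u y = \sum_(x : X) P x y * u x) ->
  forall n y, u y = \sum_(x : X) npow P n x y * u x.
Proof.
move=> hu; elim=> [|n IH] y /=.
  rewrite (bigD1 y) //= eqxx mul1r big1 ?addr0 // => x /negbTE ->.
  by rewrite mul0r.
rewrite {1}hu.
under [RHS]eq_bigr => x _ do rewrite mulr_suml.
rewrite exchange_big /=; apply: eq_bigr => z _.
rewrite (IH z) mulr_sumr; apply: eq_bigr => x _; ring.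
Qed.

Lemma irreducible_invariant_eq0 (u : X -> R) : irreducible P ->
  (forall y, u y = \sum_(x : X) P x y * u x) -> (forall x, 0 <= u x) ->
  forall y0, u y0 = 0 -> forall x, u x = 0.
Proof.
move=> irr hu u_ge0 y0 uy0 x.
have [n [_ pn]] := irr x y0.
have := npow_invariant hu n y0; rewrite uy0 => h.
have : npow P n x y0 * u x <= 0.
  rewrite h (bigD1 x) //= lerDl; apply: sumr_ge0 => z _.
  exact: mulr_ge0 (npow_ge0 _ _ _) (u_ge0 z).
rewrite pmulr_rle0 // => ux.
by apply/eqP; rewrite eq_le ux u_ge0.
Qed.

Lemma invariant_dist_unique (s1 s2 : X -> R) : irreducible P ->
  invariant_dist P s1 -> invariant_dist P s2 -> s1 = s2.
Proof.
move=> irr [[s1_ge0 s1_sum] hs1] [[s2_ge0 s2_sum] hs2].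
have s2_gt0 x : 0 < s2 x.
  rewrite lt_neqAle s2_ge0 andbT; apply/eqP => s2x.
  have zero := irreducible_invariant_eq0 irr hs2 s2_ge0 (esym s2x).
  have : \sum_(y : X) s2 y = 0 by apply: big1 => y _; exact: zero.
  by rewrite s2_sum => /eqP; rewrite oner_eq0.
have x0 : X.
  case: (pickP (fun _ : X => true)) => [x0 _ //|noX].
  by move: s2_sum; rewrite big_pred0 // => /eqP; rewrite eq_sym oner_eq0.
have [xm _ min_xm] := @arg_minP _ _ X x0 predT (fun x => s1 x / s2 x) isT.
(* s1 - c s2 is a nonnegative invariant vector vanishing at xm *)
set c := s1 xm / s2 xm.
set u := fun x => s1 x - c * s2 x.
have u_ge0 x : 0 <= u x by rewrite /u subr_ge0 -ler_pdivlMr //; exact: min_xm.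
have hu y : u y = \sum_(x : X) P x y * u x.
  rewrite /u {1}hs1 {1}hs2 mulr_sumr -sumrB.
  by apply: eq_bigr => x _; ring.
have uxm : u xm = 0 by rewrite /u /c divfK ?subrr // gt_eqF.
have u0 x : s1 x = c * s2 x.
  apply/eqP; rewrite -subr_eq0; apply/eqP.
  exact: (irreducible_invariant_eq0 irr hu u_ge0 uxm x).
have c1 : c = 1.
  have : \sum_(x : X) s1 x = c * \sum_(x : X) s2 x.
    by rewrite mulr_sumr; apply: eq_bigr => x _; exact: u0.
  by rewrite s1_sum s2_sum mulr1.
by apply: funext => x; rewrite u0 c1 mul1r.
Qed.

End invariant_distribution.

Section bisection.
Context (R : realType) (f : R -> R) (a b : R).
Hypotheses (ab : a < b) (fa : f a <= 0) (fb : 0 <= f b).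

Let lo t := (bisect f a b t).1.
Let hi t := (bisect f a b t).2.
Let mid t := bisect_mid f a b t.

Lemma bisect_step t : bisect f a b t.+1 =
  if f (mid t) == 0 then bisect f a b t
  else if 0 < f (mid t) then (lo t, mid t) else (mid t, hi t).
Proof. by []. Qed.

Lemma bisect_mid_between t : lo t <= hi t -> lo t <= mid t <= hi t.
Proof.
by move=> h; rewrite /mid /bisect_mid -/(lo t) -/(hi t); apply/andP; split; lra.
Qed.

Lemma bisect_invariant t :
  [/\ a <= lo t, lo t <= hi t, hi t <= b, f (lo t) <= 0 & 0 <= f (hi t)].
Proof.
elim: t => [|t [h1 h2 h3 h4 h5]]; first by split => //; exact: ltW.
have /andP[m1 m2] := bisect_mid_between h2.
rewrite /lo /hi bisect_step -/(lo t) -/(hi t).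
by case: eqP => [//|_]; case: ifP => fm /=; split => //; lra.
Qed.

Lemma bisect_mid_in t : a <= mid t <= b.
Proof.
have [h1 h2 h3 _ _] := bisect_invariant t.
have /andP[m1 m2] := bisect_mid_between h2.
by apply/andP; split; lra.
Qed.

Lemma bisect_lo_le t : lo t <= lo t.+1.
Proof.
have [_ h2 _ _ _] := bisect_invariant t.
have /andP[m1 _] := bisect_mid_between h2.
by rewrite {2}/lo bisect_step; case: eqP => // _; case: ifP.
Qed.

Lemma bisect_stop t k : f (mid t) = 0 -> bisect f a b (t + k) = bisect f a b t.
Proof.
move=> ft; elim: k => [|k IH]; first by rewrite addn0.
rewrite addnS bisect_step.
have -> : mid (t + k) = mid t by rewrite /mid /bisect_mid IH.
by rewrite ft eqxx.
Qed.

Lemma bisect_mid_stop t k : f (mid t) = 0 -> (t <= k)%N -> mid k = mid t.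
Proof.
by move=> ft tk; rewrite -(subnKC tk) {1}/mid /bisect_mid bisect_stop.
Qed.

Lemma bisect_width t : (forall s, f (mid s) != 0) ->
  hi t - lo t = (b - a) * (2^-1) ^+ t.
Proof.
move=> noroot; elim: t => [|t IH]; first by rewrite expr0 mulr1.
rewrite /hi /lo bisect_step (negbTE (noroot t)) -/(lo t) -/(hi t).
rewrite exprSr mulrA -IH /mid /bisect_mid -/(lo t) -/(hi t).
by case: ifP => _ /=; field.
Qed.

Lemma bisect_cvg_noroot : (forall t, f (mid t) != 0) ->
  exists2 l : R, lo @ \oo --> l & hi @ \oo --> l.
Proof.
move=> noroot.
have lo_nd : nondecreasing_seq lo by apply/nondecreasing_seqP; exact: bisect_lo_le.
have lo_ub : has_ubound (range lo).
  by exists b => _ [n _ <-]; have [_ h2 h3 _ _] := bisect_invariant n; lra.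
have lo_cvg := nondecreasing_cvgn lo_nd lo_ub.
exists (sup (range lo)) => //.
have -> : hi = fun t => lo t + (b - a) * (2^-1) ^+ t.
  by apply: funext => t; rewrite -bisect_width //; ring.
have width0 : (fun t => (b - a) * (2^-1) ^+ t) @ \oo --> (b - a) * 0.
  apply: cvgMr; apply: cvg_expr.
  by rewrite ger0_norm ?invf_lt1 ?ltr1n // invr_ge0 ler0n.
by have := cvgD lo_cvg width0; rewrite mulr0 addr0; exact.
Qed.

Hypothesis f_cont : {within [set m | a <= m <= b], continuous f}.

Lemma bisect_root : exists mstar : R,
  [/\ a <= mstar <= b,
      bisect_mid f a b @ \oo --> mstar,
      (forall t, f (bisect_mid f a b t) = 0 -> mstar = bisect_mid f a b t)
    & f mstar = 0].
Proof.
have [[t0 ft0]|noroot] := pselect (exists t, f (mid t) = 0).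
  exists (mid t0); split => //; first exact: bisect_mid_in.
    apply: cvg_near_cst; near=> k; apply: bisect_mid_stop ft0 _; near: k.
    exact: nbhs_infty_ge.
  move=> t ft; rewrite -(bisect_mid_stop ft0 (leq_maxl t0 t)).
  exact: bisect_mid_stop ft (leq_maxr t0 t).
have {}noroot t : f (mid t) != 0 by apply/eqP => ft; apply: noroot; exists t.
have [l lo_l hi_l] := bisect_cvg_noroot noroot.
have mid_l : mid @ \oo --> l.
  have -> : l = (l + l) / 2 by field.
  exact: cvgMl (cvgD lo_l hi_l).
have lI : a <= l <= b.
  have mI := bisect_mid_in; apply/andP; split.
    apply: (closed_cvg _ (@closed_ge R a) _ _ mid_l).
    by apply: nearW => n; case/andP: (mI n).
  apply: (closed_cvg _ (@closed_le R b) _ _ mid_l).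
  by apply: nearW => n; case/andP: (mI n).
have f_l u : (forall n, a <= u n <= b) -> u @ \oo --> l -> f \o u @ \oo --> f l.
  move=> uI ul.
  apply: (cvg_comp u f (cvg_within_seq (A := [set m | a <= m <= b]) uI ul)).
  exact: (subspace_continuousP _ _).1 f_cont l lI.
have in_ab t : a <= lo t <= b /\ a <= hi t <= b.
  by have [h1 h2 h3 _ _] := bisect_invariant t; split; apply/andP; split; lra.
have fl_le0 : f l <= 0.
  apply: (closed_cvg _ (@closed_le R 0) _ _ (f_l _ (fun t => (in_ab t).1) lo_l)).
  by apply: nearW => n; have [] := bisect_invariant n.
have fl_ge0 : 0 <= f l.
  apply: (closed_cvg _ (@closed_ge R 0) _ _ (f_l _ (fun t => (in_ab t).2) hi_l)).
  by apply: nearW => n; have [] := bisect_invariant n.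
exists l; split => //; last by apply/eqP; rewrite eq_le fl_le0.
by move=> t ft; move: (noroot t); rewrite ft eqxx.
Unshelve. all: by end_near.
Qed.

End bisection.

Lemma continuous_within_subr_locally_constant (R : realType) (D : set R)
    (c : R -> R) :
  (forall m0, D m0 -> \forall m \near m0, D m -> c m = c m0) ->
  {within D, continuous (fun m => m - c m)}.
Proof.
move=> c_near; apply/subspace_continuousP => m0 Dm0.
have shift_cvg : (fun m => m - c m0) @ within D (nbhs m0) --> m0 - c m0.
  by apply: cvg_within_filter; exact: cvgB cvg_id (cvg_cst _).
have eq_near : {near within D (nbhs m0), (fun m => m - c m0) =1 (fun m => m - c m)}.
  by rewrite near_withinE; apply: filterS (c_near m0 Dm0) => m cm Dm; rewrite cm.
exact: cvg_trans (near_eq_cvg eq_near) shift_cvg.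
Qed.

Theorem theorem1 (R : realType) (X : finType) (q : nat)
  (A : set 'rV[R]_q) (Gam : X -> set 'rV[R]_q)
  (a b : R) (M : (X -> R) -> R)
  (E : pseudoPMetricType R) (qE : probability (borel_type E) R)
  (w : X -> 'rV[R]_q -> R -> E -> X) (pi : X -> 'rV[R]_q -> R -> R)
  (beta : R) (V : X -> R -> R)
  (g : X -> R -> 'rV[R]_q) (s : R -> X -> R) :
  a < b ->
  (forall x, Gam x `<=` A) ->
  (forall x, Gam x !=set0) ->
  (forall x, compact (Gam x)) ->
  (forall s0, simplex s0 -> a <= M s0 <= b) ->
  (forall s0, simplex s0 -> forall e : R, 0 < e -> exists2 d : R, 0 < d &
     forall s1, simplex s1 -> (forall x, `|s1 x - s0 x| < d) ->
       `|M s1 - M s0| < e) ->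
  hausdorff_space E ->
  compact [set: E] ->
  (exists D : set E, countable D /\ closure D = [set: E]) ->
  (forall x a0 m0 z0, A a0 -> a <= m0 <= b ->
     \forall p \near (a0, m0, z0),
        A p.1.1 -> a <= p.1.2 <= b -> w x p.1.1 p.1.2 p.2 = w x a0 m0 z0) ->
  (exists K : R, forall x a' m, A a' -> a <= m <= b -> `|pi x a' m| <= K) ->
  (forall x, {within [set p : 'rV[R]_q * R | A p.1 /\ a <= p.2 <= b],
              continuous (fun p => pi x p.1 p.2)}) ->
  0 < beta < 1 ->
  (forall m, a <= m <= b -> bellman_eq qE Gam w pi beta V m) ->
  (forall m, a <= m <= b -> forall x,
     optG qE Gam w pi beta V x m = [set g x m]) ->
  (forall m, a <= m <= b ->
     irreducible (transL qE w g m) /\ aperiodic (transL qE w g m)) ->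
  (forall m, a <= m <= b -> invariant_dist (transL qE w g m) (s m)) ->
  let f := fun m : R => m - M (s m) in
  exists mstar : R,
    [/\ a <= mstar <= b,
        bisect_mid f a b @ \oo --> mstar,
        (forall t, f (bisect_mid f a b t) = 0 -> mstar = bisect_mid f a b t),
        f mstar = 0
      & is_MFE qE Gam w pi beta V M g (s mstar)].
Proof.
move=> ab GamA _ compact_Gam M_in _ _ compactE _ w_near _ pi_cont beta01
  bellman g_opt chain s_inv f.
have s_near m0 : a <= m0 <= b ->
    \forall m \near m0, a <= m <= b -> s m = s m0.
  move=> Im0; have := transL_near w_near compactE GamA compact_Gam pi_cont
    beta01 bellman g_opt Im0.
  apply: filterS => m L_eq Im.
  apply: (invariant_dist_unique (@transL_ge0 _ _ _ _ qE w g m0) (chain m0 Im0).1).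
    by rewrite -(L_eq Im); exact: s_inv.
  exact: s_inv.
have f_cont : {within [set m | a <= m <= b], continuous f}.
  apply: continuous_within_subr_locally_constant => m0 Im0.
  by apply: filterS (s_near m0 Im0) => m sm Im; rewrite sm.
have Ia : a <= a <= b by rewrite lexx ltW.
have Ib : a <= b <= b by rewrite lexx ltW.
have fa : f a <= 0 by rewrite /f subr_le0; case/andP: (M_in _ (s_inv a Ia).1).
have fb : 0 <= f b by rewrite /f subr_ge0; case/andP: (M_in _ (s_inv b Ib).1).
have [mstar [mI mcvg mstop f0]] := bisect_root ab fa fb f_cont.
exists mstar; split => //.
have M_mstar : M (s mstar) = mstar.
  by apply/esym/eqP; rewrite -subr_eq0; apply/eqP.
have [s_simplex s_fix] := s_inv mstar mI.
by rewrite /is_MFE M_mstar; split => //; split => // x; rewrite g_opt.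
Qed.
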